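(* For any two finite structures $\mathcal M$ and $\mathcal N$ over a vocabulary containing the binary relation symbol $E$, and any points $w\in\mathrm{DOM}(\mathcal M)$ and $u\in\mathrm{DOM}(\mathcal N)$, we have $\mathsf{WL}^\infty(\mathcal M,w)=\mathsf{WL}^\infty(\mathcal N,u)$ if and only if $\mathcal M\uplus\mathcal N\models\varphi_{\mathsf{WL}}(w,u)$, where $\varphi_{\mathsf{WL}}(x,y) := \mathrm{GFP}_{W,x,y}\big[Wxy\land\forall z\,\big(Hyx[\,Exy\land Wyz,\ Eyx\land Wxz\,]\big)\big]$.
   Context: $\mathcal M\uplus\mathcal N$ is the disjoint union of $\mathcal M$ and $\mathcal N$ (domains and relations taken as disjoint unions). Weisfeiler–Leman colors with respect to $E$: $c^{\mathcal M}_0(w)=\ast$ (a fixed constant), $c^{\mathcal M}_{t+1}(w)=\big(c^{\mathcal M}_t(w),\{\{c^{\mathcal M}_t(v):(w,v)\in E^{\mathcal M}\}\}\big)$ (multiset); $\mathsf{WL}^\infty(\mathcal M,w)=\mathsf{WL}^\infty(\mathcal N,u)$ means that $w$ and $u$ receive the same stable Weisfeiler–Leman color, i.e. $c^{\mathcal M}_t(w)=c^{\mathcal N}_t(u)$ for all $t\in\mathbb N$. First-order logic is extended as follows. Härtig's quantifier: for formulae $\varphi,\psi$ and variables $x,y$, $Hxy[\varphi,\psi]$ is a formula, true in a structure $\mathcal A$ under an assignment $s$ iff $|\{a\in\mathrm{DOM}(\mathcal A):\mathcal A\models\varphi[s(x\mapsto a)]\}|=|\{b\in\mathrm{DOM}(\mathcal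 A):\mathcal A\models\psi[s(y\mapsto b)]\}|$ (so $x$ is bound in $\varphi$ and $y$ is bound in $\psi$). Greatest fixed points: for a formula $\varphi(x,y)$ (possibly with Härtig quantifiers) containing a binary relation symbol $W$, $\mathrm{GFP}_{W,x,y}[\varphi]$ is a formula with free variables $x,y$; in $\mathcal A$ let $W^0=\mathrm{DOM}(\mathcal A)^2$ and $W^{n+1}=\{(a,b)\in\mathrm{DOM}(\mathcal A)^2:\mathcal A\models\varphi(a,b)\text{ with }W\text{ interpreted as }W^n\}$; then $\mathcal A\models\mathrm{GFP}_{W,x,y}[\varphi](a,b)$ iff $(a,b)\in W^n$ for all $n\in\mathbb N$. *)

From HB Require Import structures.
From mathcomp Require Import all_boot.
From mathcomp Require Import finmap multiset.
Set Implicit Arguments. Unset Strict Implicit. Unset Printing Implicit Defensive.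

(* ---------- Finite structures (only the symbol E matters) ---------- *)
Record struct := Struct { dom : finType; Erel : rel dom }.

Definition union_E (M N : struct) : rel (dom M + dom N)%type :=
  fun a b => match a, b with
  | inl a', inl b' => @Erel M a' b'
  | inr a', inr b' => @Erel N a' b'
  | _, _ => false
  end.
Definition disj_union (M N : struct) : struct :=
  @Struct (dom M + dom N)%type (@union_E M N).

Fixpoint Col (t : nat) : choiceType :=
  if t is t'.+1 then ((Col t' * multiset (Col t'))%type : choiceType)
  else (unit : choiceType).

Fixpoint wl_col (A : struct) (t : nat) : dom A -> Col t :=
  match t return dom A -> Col t with
  | 0 => fun _ => tt
  | t'.+1 => fun w =>
      (wl_col t' w, seq_mset [seq wl_col t' v | v <- enum [pred v | @Erel A w v]])
  end.

Definition WL_inf_eq (M N : struct) (w : dom M) (u : dom N) : Prop :=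
  forall t : nat, wl_col t w = wl_col t u.

Inductive form :=
  | FE of nat & nat
  | FW of nat & nat
  | FNot of form
  | FAnd of form & form
  | FAll of nat & form
  | FH of nat & nat & form & form.  (* H x y [phi, psi]: x bound in phi, y in psi *)

Definition upd (D : Type) (s : nat -> D) (z : nat) (a : D) : nat -> D :=
  fun n => if n == z then a else s n.

Fixpoint sat (A : struct) (W : rel (dom A)) (s : nat -> dom A) (f : form) : bool :=
  match f with
  | FE x y => @Erel A (s x) (s y)
  | FW x y => W (s x) (s y)
  | FNot g => ~~ sat W s g
  | FAnd g h => sat W s g && sat W s h
  | FAll z g => [forall a : dom A, sat W (upd s z a) g]
  | FH x y g h =>
      #|[pred a : dom A | sat W (upd s x a) g]| ==
      #|[pred b : dom A | sat W (upd s y b) h]|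
  end.

(* Greatest fixed point GFP_{W,x,y}[phi]: W^0 = DOM^2,
   W^{n+1} = {(a,b) | A |= phi(a,b) with W := W^n}. *)
Fixpoint gfp_stage (A : struct) (phi : form) (x y : nat) (s : nat -> dom A)
    (n : nat) : rel (dom A) :=
  match n with
  | 0 => fun _ _ => true
  | n'.+1 => fun a b => sat (gfp_stage phi x y s n') (upd (upd s x a) y b) phi
  end.

Definition sat_gfp (A : struct) (phi : form) (x y : nat) (s : nat -> dom A)
    (a b : dom A) : Prop :=
  forall n : nat, gfp_stage phi x y s n a b.

(* Variables: x = 0, y = 1, z = 2. *)
Definition phiWL_body : form :=
  FAnd (FW 0 1)
       (FAll 2 (FH 1 0 (FAnd (FE 0 1) (FW 1 2)) (FAnd (FE 1 0) (FW 0 2)))).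

(* (M ⊎ N) |= phi_WL(w,u); phi_WL has no free variables besides x,y,
   so the background assignment is irrelevant; we use the constant one. *)
Definition models_phiWL (M N : struct) (w : dom M) (u : dom N) : Prop :=
  @sat_gfp (disj_union M N) phiWL_body 0 1 (fun _ => inl w) (inl w) (inr u).

From mathcomp Require Import all_boot.
From mathcomp Require Import finmap multiset.
Set Implicit Arguments. Unset Strict Implicit.

(* The n-th stage of the fixed point is exactly "same WL colour after n
   rounds": the Härtig quantifier compares, for every colour class of z, the
   number of E-successors of x and of y in that class, which is equality of
   the multisets of successor colours.  In the disjoint union no E-edge leaves
   either part, so the colours computed in M ⊎ N are those of M and N. *)

Lemma count_mem_map_enum (T : finType) (C : eqType) (g : T -> C) (P : pred T) c :
  count_mem c [seq g v | v <- enum P] = #|[pred v | P v && (g v == c)]|.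
Proof.
rewrite count_map cardE /enum_mem size_filter count_filter.
by apply: eq_count => v; rewrite /= !inE andbC.
Qed.

Lemma seq_mset_map_enumP (T : finType) (C : choiceType) (g : T -> C) (P Q : pred T) :
  reflect (forall z, #|[pred v | P v && (g v == g z)]| = #|[pred v | Q v && (g v == g z)]|)
          (seq_mset [seq g v | v <- enum P] == seq_mset [seq g v | v <- enum Q]).
Proof.
apply: (iffP eqP) => [eqPQ z | eq_cls].
  by rewrite -!count_mem_map_enum -!mset_seqE eqPQ.
apply/msetP => c; rewrite !mset_seqE !count_mem_map_enum.
have [z /eqP <- | not_col] := pickP (fun v => g v == c); first exact: eq_cls.
by rewrite !eq_card0 // => v; rewrite !inE not_col andbF.
Qed.

Lemma gfp_stage_phiWL (A : struct) (s : nat -> dom A) n a b :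
  gfp_stage phiWL_body 0 1 s n a b = (wl_col n a == wl_col n b).
Proof.
elim: n a b => [//|n IH] a b /=.
rewrite /upd /= IH xpair_eqE; congr andb.
have class_card c z : #|[pred v | Erel c v & gfp_stage phiWL_body 0 1 s n v z]| =
    #|[pred v | Erel c v && (wl_col n v == wl_col n z)]|.
  by apply: eq_card => v; rewrite !inE IH.
apply/forallP/seq_mset_map_enumP => [eq_card_z z | eq_cls z].
  by rewrite -!class_card; apply/eqP/eq_card_z.
by rewrite !class_card eq_cls.
Qed.

Lemma perm_enum_inj (T1 T2 : finType) (f : T1 -> T2) (P : pred T1) (Q : pred T2) :
  injective f -> (forall x, Q (f x) = P x) -> {subset Q <= codom f} ->
  perm_eq (enum Q) [seq f x | x <- enum P].
Proof.
move=> inj_f QfP Qf; apply: uniq_perm; rewrite ?(map_inj_uniq inj_f) ?enum_uniq //.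
move=> y; rewrite mem_enum; have [/codomP[x ->] | not_f] := boolP (y \in codom f).
  by rewrite (mem_map inj_f) mem_enum [_ \in Q]QfP.
apply/idP/mapP => [/Qf | [x _ y_fx]]; last by rewrite y_fx codom_f in not_f.
by rewrite (negbTE not_f).
Qed.

Section Embedding.

Variables (A B : struct) (f : dom A -> dom B).
Hypothesis f_inj : injective f.
Hypothesis Erel_f : forall a a', Erel (f a) (f a') = Erel a a'.
Hypothesis Erel_codom : forall a y, Erel (f a) y -> y \in codom f.

Lemma wl_col_embed n a : wl_col n (f a) = wl_col n a.
Proof.
elim: n a => [//|n IH] a /=; rewrite IH; congr pair; apply/eq_seq_msetP.
apply: perm_trans (perm_map _ (perm_enum_inj (P := [pred v | Erel a v]) _ _ _)) _.
- exact: f_inj.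
- by move=> a'; rewrite /= Erel_f.
- exact: Erel_codom.
by rewrite -map_comp (eq_map IH).
Qed.

End Embedding.

Lemma wl_col_inl (M N : struct) n (w : dom M) :
  @wl_col (disj_union M N) n (inl w) = wl_col n w.
Proof.
apply: wl_col_embed => [? ? [] // | // | a [y _|//]]; exact: codom_f.
Qed.

Lemma wl_col_inr (M N : struct) n (u : dom N) :
  @wl_col (disj_union M N) n (inr u) = wl_col n u.
Proof.
apply: wl_col_embed => [? ? [] // | // | a [//|y _]]; exact: codom_f.
Qed.

Theorem theorem3 (M N : struct) (w : dom M) (u : dom N) :
  @WL_inf_eq M N w u <-> @models_phiWL M N w u.
Proof.
split=> [eq_col n | sat_phi n].
  by rewrite gfp_stage_phiWL wl_col_inl wl_col_inr eq_col.
by have := sat_phi n; rewrite gfp_stage_phiWL wl_col_inl wl_col_inr => /eqP.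
Qed.
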